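(* Let $A$ be a conservative $d$-dim Petri net. For every configuration $x$ of $A$, the reachability set $R(x)=\{y\mid x\xrightarrow{*}y\}$ is finite and contains a bottom SCC $X\subseteq R(x)$. If, moreover, $A$ is structurally live, then $A$ is reversible.
   Context: A $d$-dim Petri net $A$ is a finite set of actions $a=(a_-,a_+)\in\mathbb{N}^d\times\mathbb{N}^d$; configurations are $x\in\mathbb{N}^d$; $x\xrightarrow{a}y$ if $x=c+a_-$, $y=c+a_+$ for some $c\in\mathbb{N}^d$; $\xrightarrow{*}$ is the reflexive-transitive closure. $\Delta(a)=a_+-a_-$. $A$ is conservative if some $w\in(\mathbb{N}_+)^d$ satisfies $\langle\Delta(a),w\rangle=0$ for all $a\in A$. A bottom SCC of $A$ is a nonempty set $X$ of configurations such that $\{y\mid x\xrightarrow{*}y\}=X$ for every $x\in X$. A configuration $x$ is live if for every $a\in A$ and every $x'$ with $x\xrightarrow{*}x'$ there is $y$ with $x'\xrightarrow{*}y\geq a_-$; $A$ is structurally live if it has a live configuration. $A$ is reversible if $-\Delta(a)$ belongs to the set of finite sums of elements of $\{\Delta(b)\mid b\in A\}$ for every $a\in A$. *)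

From mathcomp Require Import all_boot all_order all_algebra.
Set Implicit Arguments. Unset Strict Implicit. Unset Printing Implicit Defensive.
Import GRing.Theory Num.Theory.

Definition conf (d : nat) := {ffun 'I_d -> nat}.
(* an action a = (a_-, a_+) *)
Definition action (d : nat) := (conf d * conf d)%type.
Definition petri_net (d : nat) := seq (action d).

Definition step_by d (a : action d) (x y : conf d) : Prop :=
  exists c : conf d, (forall i, x i = (c i + a.1 i)%N) /\ (forall i, y i = (c i + a.2 i)%N).

Definition step d (A : petri_net d) (x y : conf d) : Prop :=
  exists2 a, a \in A & step_by a x y.

Inductive reach d (A : petri_net d) : conf d -> conf d -> Prop :=
| reach_refl x : reach A x x
| reach_step x y z : step A x y -> reach A y z -> reach A x z.

Definition delta d (a : action d) : 'I_d -> int :=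
  fun i => (Posz (a.2 i) - Posz (a.1 i))%R.

Definition conservative d (A : petri_net d) : Prop :=
  exists w : 'I_d -> nat, (forall i, (0 < w i)%N) /\
    forall a, a \in A -> (\sum_(i < d) delta a i * Posz (w i) = 0)%R.

Definition bottom_SCC d (A : petri_net d) (X : conf d -> Prop) : Prop :=
  (exists x, X x) /\ forall x, X x -> forall y, reach A x y <-> X y.

Definition live d (A : petri_net d) (x : conf d) : Prop :=
  forall a, a \in A -> forall x', reach A x x' ->
    exists y, reach A x' y /\ forall i, (a.1 i <= y i)%N.

Definition structurally_live d (A : petri_net d) : Prop := exists x, live A x.

Definition reversible d (A : petri_net d) : Prop :=
  forall a, a \in A -> exists s : seq (action d), all (fun b => b \in A) s /\
    forall i, (- delta a i = \sum_(b <- s) delta b i)%R.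

Definition finite_set d (P : conf d -> Prop) : Prop :=
  exists s : seq (conf d), forall y, P y -> y \in s.

From mathcomp Require Import all_boot all_order all_algebra.
From mathcomp Require Import zify ring.
From Stdlib Require Import Classical.
Set Implicit Arguments. Unset Strict Implicit.
Import GRing.Theory Num.Theory.

(* A positive weight vector w with <Delta(a), w> = 0 makes the weight of a
   configuration invariant along runs, so every y reachable from x satisfies
   y_i <= w.x: the reachability set R(x) is finite.  In a finite reachability
   set one cannot forever move to a configuration that does not reach back,
   so some R(z) with z in R(x) is strongly connected, i.e. a bottom SCC.
   For reversibility, take a live x0 and a bottom SCC X inside R(x0); by
   liveness some y in X enables a.  Firing a stays in X, so there is a run
   back to y, and the actions of that run sum to -Delta(a). *)

Section Reachability.

Variables (d : nat) (A : petri_net d).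

Lemma reach_trans (x y z : conf d) : reach A x y -> reach A y z -> reach A x z.
Proof. by elim=> // x1 y1 z1 Hxy _ IH /IH; apply: reach_step. Qed.

Lemma step_reach (x y : conf d) : step A x y -> reach A x y.
Proof. by move=> Hxy; apply: reach_step Hxy (reach_refl _ _). Qed.

Lemma reach_delta_sum (x y : conf d) : reach A x y ->
  exists2 s : seq (action d), all (mem A) s &
    forall i, (Posz (y i) - Posz (x i) = \sum_(b <- s) delta b i)%R.
Proof.
elim=> [x0|x1 y1 z1 [a aA [c [Hx Hy]]] _ [s As Hs]].
  by exists [::] => // i; rewrite big_nil subrr.
exists (a :: s); first by rewrite /= aA.
by move=> i; rewrite big_cons -Hs /delta Hx Hy !PoszD; ring.
Qed.

Definition fire (a : action d) (y : conf d) : conf d :=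
  [ffun i => y i - a.1 i + a.2 i]%N.

Lemma step_fire (a : action d) (y : conf d) :
  a \in A -> (forall i, a.1 i <= y i)%N -> step A y (fire a y).
Proof.
move=> aA Hay; exists a => //; exists [ffun i => y i - a.1 i]%N.
by split=> i; rewrite !ffunE // subnK.
Qed.

Lemma delta_fire (a : action d) (y : conf d) :
  (forall i, a.1 i <= y i)%N ->
  forall i, (Posz (y i) - Posz (fire a y i) = - delta a i)%R.
Proof.
move=> Hay i; rewrite /fire /delta ffunE PoszD -subzn ?Hay //.
by move: (Posz (y i)) (Posz (a.1 i)) (Posz (a.2 i)) => p q r; ring.
Qed.

Lemma bottom_SCC_reversible_action (X : conf d -> Prop) (a : action d) (y : conf d) :
  bottom_SCC A X -> X y -> a \in A -> (forall i, a.1 i <= y i)%N ->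
  exists2 s : seq (action d), all (mem A) s &
    forall i, (- delta a i = \sum_(b <- s) delta b i)%R.
Proof.
move=> [_ HX] Xy aA Hay.
have Xfire : X (fire a y) by apply/(HX y Xy)/step_reach/step_fire.
have [s As Hs] := reach_delta_sum (proj2 (HX _ Xfire y) Xy).
by exists s => // i; rewrite -Hs delta_fire.
Qed.

Lemma size_filter_neq_lt (T : eqType) (s : seq T) x :
  x \in s -> (size [seq t <- s | t != x] < size s)%N.
Proof.
move=> xs; rewrite size_filter -(count_predC (pred1 x) s) addnC -addn1 leq_add2l.
by rewrite -has_count; apply/hasP; exists x => /=.
Qed.

Lemma finite_reach_bottom_SCC (L : seq (conf d)) (x : conf d) :
  (forall y, reach A x y -> y \in L) ->
  exists2 X : conf d -> Prop, (forall y, X y -> reach A x y) & bottom_SCC A X.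
Proof.
move=> HxL; have [n] := ubnP (size L); elim: n L x HxL => // n IH L x HxL.
rewrite ltnS => HL.
have [[z [Hxz Hzx]]|Hback] := classic (exists z, reach A x z /\ ~ reach A z x).
  have [y Hzy||X HX HXb] := IH [seq t <- L | t != x] z.
  - rewrite mem_filter HxL ?andbT; last exact: reach_trans Hxz Hzy.
    by apply: contra_notN Hzx => /eqP <-.
  - by rewrite (leq_trans _ HL) // size_filter_neq_lt // HxL //; apply: reach_refl.
  by exists X => // y /HX; apply: reach_trans.
exists (reach A x) => //; split; first by exists x; apply: reach_refl.
move=> y Hxy z; split; first exact: reach_trans.
apply: reach_trans; apply: NNPP => Hyx; apply: Hback; by exists y.
Qed.

Section Conservation.

Variable w : 'I_d -> nat.
Hypothesis w_conserved :
  forall a, a \in A -> (\sum_(i < d) delta a i * Posz (w i) = 0)%R.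

Definition weight (x : conf d) : nat := \sum_(i < d) x i * w i.

Lemma reach_weight (x y : conf d) : reach A x y -> weight x = weight y.
Proof.
elim=> // x1 y1 z1 [a aA [c [Hx Hy]]] _ <-.
suff: (Posz (weight x1) - Posz (weight y1) = 0)%R by move/eqP; rewrite subr_eq0 => /eqP [].
rewrite /weight -!natz !natr_sum -sumrB.
transitivity (- \sum_(i < d) delta a i * Posz (w i))%R; last by rewrite w_conserved ?oppr0.
by rewrite -sumrN; apply: eq_bigr => i _; rewrite /delta Hx Hy !natz !PoszM !PoszD; ring.
Qed.

Hypothesis w_pos : forall i, (0 < w i)%N.

Lemma reach_le_weight (x y : conf d) : reach A x y -> forall i, (y i <= weight x)%N.
Proof.
move=> /reach_weight -> i; rewrite /weight (bigD1 i) //=.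
by have := w_pos i; nia.
Qed.

End Conservation.

End Reachability.

Lemma bounded_conf_finite d (W : nat) :
  finite_set (fun y : conf d => forall i, (y i <= W)%N).
Proof.
exists [seq [ffun i => nat_of_ord (f i)] | f : {ffun 'I_d -> 'I_W.+1}].
move=> y Hy; apply/imageP; exists [ffun i => inord (y i)] => //.
by apply/ffunP => i; rewrite !ffunE inordK // ltnS.
Qed.

Theorem proposition7 (d : nat) (A : petri_net d) :
  conservative A ->
  (forall x : conf d,
     finite_set (reach A x) /\
     exists X : conf d -> Prop, (forall y, X y -> reach A x y) /\ bottom_SCC A X) /\
  (structurally_live A -> reversible A).
Proof.
move=> [w [w_pos w_conserved]].
have reach_finite x : finite_set (reach A x).
  have [s Hs] := bounded_conf_finite d (weight w x).
  by exists s => y /reach_le_weight Hy; apply: Hs => i; apply: Hy.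
have reach_bottom x : exists2 X, (forall y, X y -> reach A x y) & bottom_SCC A X.
  by have [s Hs] := reach_finite x; apply: finite_reach_bottom_SCC Hs.
split=> [x|[x0 x0_live] a aA].
  by split=> //; have [X] := reach_bottom x; exists X.
have [X HX bottomX] := reach_bottom x0; have [[z Xz] X_closed] := bottomX.
have [y [Hzy Hay]] := x0_live a aA z (HX z Xz).
have Xy : X y by apply/(X_closed z Xz).
have [s As Hs] := bottom_SCC_reversible_action bottomX Xy aA Hay.
by exists s.
Qed.
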